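(* For all positive integers $a,b$, the Aztec rectangle $\mathcal{AR}_{a,b}$ (with no defects) has a cover by L-trominoes if and only if $a(b+1)+b(a+1)\equiv 0 \pmod 3$.
   Context: A cell is a unit square $[i,i+1]\times[j,j+1]$ with $i,j\in\mathbb{Z}$, labelled by its coordinate $(i,j)$. A region is a finite set of cells whose union is connected (cells sharing an edge are adjacent). An L-tromino is a set of three cells equal to a $2\times 2$ block of cells with one cell removed, i.e. a translate of one of $\{(0,0),(1,0),(0,1)\}$, $\{(0,0),(1,0),(1,1)\}$, $\{(0,0),(0,1),(1,1)\}$, $\{(1,0),(0,1),(1,1)\}$. Some cells of a region may be designated as defects. A cover (tiling) of a region $R$ with defect set $D\subseteq R$ is a set of pairwise disjoint L-trominoes, each contained in $R\setminus D$, whose union is exactly $R\setminus D$. For positive integers $a,b$, the Aztec rectangle $\mathcal{AR}_{a,b}$ is (up to translation) the region consisting of the cells $(i,j)\in\mathbb{Z}^2$ with $0\le i+j\le 2b$ and $1\le j-i\le 2a+1$; it has $a$ cells along its southwestern side, $b$ cells along its northwestern side, and $a(b+1)+b(a+1)$ cells in total. *)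

From Stdlib Require Import ZArith List.
Import ListNotations.
Open Scope Z_scope.

(** A cell (i,j) is the unit square [i,i+1] x [j,j+1]. *)
Definition cell : Type := (Z * Z)%type.

Definition L_tromino (t : list cell) : Prop :=
  exists i j : Z,
    t = [(i, j); (i+1, j); (i, j+1)] \/
    t = [(i, j); (i+1, j); (i+1, j+1)] \/
    t = [(i, j); (i, j+1); (i+1, j+1)] \/
    t = [(i+1, j); (i, j+1); (i+1, j+1)].

Definition cover (R D : cell -> Prop) (ts : list (list cell)) : Prop :=
  (forall t, In t ts -> L_tromino t) /\
  NoDup (concat ts) /\
  (forall c : cell, In c (concat ts) <-> (R c /\ ~ D c)).

Definition aztec_rect (a b : Z) (c : cell) : Prop :=
  0 <= fst c + snd c <= 2 * b /\ 1 <= snd c - fst c <= 2 * a + 1.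

Definition no_defects : cell -> Prop := fun _ => False.

From Stdlib Require Import ZArith List Lia Permutation FinFun Bool.
Import ListNotations.
Open Scope Z_scope.

(* Every tromino covers three cells, so 3 divides the area 2ab + a + b, which
   happens exactly when a = b = 0 or a = b = 2 (mod 3).  Conversely, in the
   rotated coordinates u = i + j, v = j - i the Aztec rectangle AR_{a,b} is the
   box [0, 2b] x [1, 2a + 1].  AR_{2,2} and AR_{3,3} are tiled by hand, and
   raising a or b by 3 adds a band of width 6 to the box; such a band is a
   tiled end piece followed by translates of one tiled 6 x 6 block. *)

Definition tileable (R : cell -> Prop) : Prop := exists ts, cover R no_defects ts.

(* Only the cells with u = v (mod 2) are actual cells. *)
Definition box (u0 u1 v0 v1 : Z) (c : cell) : Prop :=
  u0 <= fst c + snd c <= u1 /\ v0 <= snd c - fst c <= v1.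

Lemma aztec_rect_box a b : aztec_rect a b = box 0 (2 * b) 1 (2 * a + 1).
Proof. reflexivity. Qed.

Lemma tileable_ext (R R' : cell -> Prop) :
  (forall c, R c <-> R' c) -> tileable R -> tileable R'.
Proof.
  intros HR [ts [HL [HN HM]]]. exists ts. split; [exact HL | split; [exact HN |]].
  intros c. rewrite HM, HR. tauto.
Qed.

Lemma tileable_union (R1 R2 : cell -> Prop) :
  (forall c, R1 c -> R2 c -> False) ->
  tileable R1 -> tileable R2 -> tileable (fun c => R1 c \/ R2 c).
Proof.
  intros Hdisj [ts1 [HL1 [HN1 HM1]]] [ts2 [HL2 [HN2 HM2]]]. exists (ts1 ++ ts2).
  unfold no_defects in *. split; [| split].
  - intros t Ht. apply in_app_or in Ht as [Ht | Ht]; auto.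
  - rewrite concat_app. apply NoDup_app; auto.
    intros c Hc1 Hc2. apply HM1 in Hc1. apply HM2 in Hc2. apply (Hdisj c); tauto.
  - intros c. rewrite concat_app, in_app_iff, HM1, HM2. tauto.
Qed.

Definition translate (dx dy : Z) (c : cell) : cell := (fst c + dx, snd c + dy).

Lemma translate_inj dx dy : Injective (translate dx dy).
Proof.
  intros [x y] [z w] H. unfold translate in H; simpl in H.
  injection H as Hx Hy. f_equal; lia.
Qed.

Lemma L_tromino_translate dx dy t : L_tromino t -> L_tromino (map (translate dx dy) t).
Proof.
  intros [i [j Ht]]. exists (i + dx), (j + dy). unfold translate.
  destruct Ht as [-> | [-> | [-> | ->]]]; simpl;
    [left | right; left | right; right; left | right; right; right];
    repeat match goal with
           | |- cons _ _ = cons _ _ => f_equal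
           | |- pair _ _ = pair _ _ => f_equal; try ring
           end.
Qed.

Lemma tileable_translate dx dy (R : cell -> Prop) :
  tileable R -> tileable (fun c => R (fst c - dx, snd c - dy)).
Proof.
  intros [ts [HL [HN HM]]]. exists (map (map (translate dx dy)) ts).
  unfold no_defects in *. split; [| split].
  - intros t Ht. apply in_map_iff in Ht as [t0 [<- Ht0]].
    apply L_tromino_translate, HL, Ht0.
  - rewrite <- concat_map. apply Injective_map_NoDup; [apply translate_inj | exact HN].
  - intros [i j]. rewrite <- concat_map, in_map_iff. split.
    + intros [[x y] [E Hin]]. apply HM in Hin. unfold translate in E; simpl in E.
      injection E as <- <-. simpl. replace (x + dx - dx) with x by ring.
      replace (y + dy - dy) with y by ring. exact Hin.
    + intros [HR _]. exists (i - dx, j - dy). split.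
      * unfold translate; simpl. f_equal; ring.
      * apply HM. simpl in HR. tauto.
Qed.

Lemma tileable_box_translate p q {u0 u1 v0 v1 u0' u1' v0' v1'} :
  tileable (box u0 u1 v0 v1) ->
  u0' = u0 + 2 * p -> u1' = u1 + 2 * p -> v0' = v0 + 2 * q -> v1' = v1 + 2 * q ->
  tileable (box u0' u1' v0' v1').
Proof.
  intros H -> -> -> ->. refine (tileable_ext _ _ _ (tileable_translate (p - q) (p + q) _ H)).
  intros c. unfold box; cbn [fst snd]. lia.
Qed.

Lemma tileable_box_split_u u0 m u1 v0 v1 :
  u0 <= m + 1 -> m <= u1 ->
  tileable (box u0 m v0 v1) -> tileable (box (m + 1) u1 v0 v1) ->
  tileable (box u0 u1 v0 v1).
Proof.
  intros Hlo Hhi H1 H2. refine (tileable_ext _ _ _ (tileable_union _ _ _ H1 H2));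
    intros c; unfold box; lia.
Qed.

Lemma tileable_box_split_v u0 u1 v0 m v1 :
  v0 <= m + 1 -> m <= v1 ->
  tileable (box u0 u1 v0 m) -> tileable (box u0 u1 (m + 1) v1) ->
  tileable (box u0 u1 v0 v1).
Proof.
  intros Hlo Hhi H1 H2. refine (tileable_ext _ _ _ (tileable_union _ _ _ H1 H2));
    intros c; unfold box; lia.
Qed.

Lemma tileable_box_repeat_u {u0 u1 v0 v1} n :
  tileable (box u0 u1 v0 v1) -> tileable (box (u1 + 1) (u1 + 6) v0 v1) ->
  u0 <= u1 + 1 -> 0 <= n ->
  tileable (box u0 (u1 + 6 * n) v0 v1).
Proof.
  intros H B Hu Hn. pattern n; apply natlike_ind; [| | exact Hn].
  - apply (tileable_box_translate 0 0 H); lia.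
  - intros k Hk IH. apply (tileable_box_split_u _ (u1 + 6 * k)); [lia | lia | exact IH |].
    apply (tileable_box_translate (3 * k) 0 B); lia.
Qed.

Lemma tileable_box_repeat_v {u0 u1 v0 v1} n :
  tileable (box u0 u1 v0 v1) -> tileable (box u0 u1 (v1 + 1) (v1 + 6)) ->
  v0 <= v1 + 1 -> 0 <= n ->
  tileable (box u0 u1 v0 (v1 + 6 * n)).
Proof.
  intros H B Hv Hn. pattern n; apply natlike_ind; [| | exact Hn].
  - apply (tileable_box_translate 0 0 H); lia.
  - intros k Hk IH. apply (tileable_box_split_v _ _ _ (v1 + 6 * k)); [lia | lia | exact IH |].
    apply (tileable_box_translate 0 (3 * k) B); lia.
Qed.

Section AztecPeriodic.

Variable a0 : Z.
Hypothesis a0_ge0 : 0 <= a0.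
Hypothesis base : tileable (aztec_rect a0 a0).
Hypothesis row_block : tileable (box 0 (2 * a0) 2 7).
Hypothesis col_base : tileable (box 1 6 1 (2 * a0 + 1)).
Hypothesis col_block : tileable (box 1 6 2 7).

Lemma tileable_aztec_col n : 0 <= n -> tileable (box 1 6 1 (2 * (a0 + 3 * n) + 1)).
Proof.
  intros Hn.
  assert (block : tileable (box 1 6 (2 * a0 + 1 + 1) (2 * a0 + 1 + 6)))
    by (apply (tileable_box_translate 0 a0 col_block); lia).
  pose proof (tileable_box_repeat_v n col_base block ltac:(lia) Hn) as H.
  apply (tileable_box_translate 0 0 H); lia.
Qed.

Lemma tileable_aztec_row n : 0 <= n -> tileable (aztec_rect (a0 + 3 * n) a0).
Proof.
  intros Hn. rewrite aztec_rect_box in *.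
  assert (block : tileable (box 0 (2 * a0) (2 * a0 + 1 + 1) (2 * a0 + 1 + 6)))
    by (apply (tileable_box_translate 0 a0 row_block); lia).
  pose proof (tileable_box_repeat_v n base block ltac:(lia) Hn) as H.
  apply (tileable_box_translate 0 0 H); lia.
Qed.

Lemma tileable_aztec_period n m : 0 <= n -> 0 <= m ->
  tileable (aztec_rect (a0 + 3 * n) (a0 + 3 * m)).
Proof.
  intros Hn Hm. pose proof (tileable_aztec_row n Hn) as row.
  rewrite aztec_rect_box in *.
  assert (block : tileable (box (2 * a0 + 1) (2 * a0 + 6) 1 (2 * (a0 + 3 * n) + 1)))
    by (apply (tileable_box_translate a0 0 (tileable_aztec_col n Hn)); lia).
  pose proof (tileable_box_repeat_u m row block ltac:(lia) Hm) as H.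
  apply (tileable_box_translate 0 0 H); lia.
Qed.

End AztecPeriodic.

Definition zseq (lo : Z) (n : nat) : list Z := map (fun k => lo + Z.of_nat k) (seq 0 n).

Lemma in_zseq lo n x : In x (zseq lo n) <-> lo <= x < lo + Z.of_nat n.
Proof.
  unfold zseq; rewrite in_map_iff; split.
  - intros [k [<- Hk]]. apply in_seq in Hk. lia.
  - intros H. exists (Z.to_nat (x - lo)). rewrite in_seq. lia.
Qed.

Definition tromino (k : nat) (i j : Z) : list cell :=
  match k with
  | O => [(i, j); (i + 1, j); (i, j + 1)]
  | 1%nat => [(i, j); (i + 1, j); (i + 1, j + 1)]
  | 2%nat => [(i, j); (i, j + 1); (i + 1, j + 1)]
  | _ => [(i + 1, j); (i, j + 1); (i + 1, j + 1)]
  end.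

Lemma L_tromino_tromino k i j : L_tromino (tromino k i j).
Proof. exists i, j. destruct k as [| [| [| k]]]; simpl; tauto. Qed.

Definition cell_eq_dec (c d : cell) : {c = d} + {c <> d}.
Proof. decide equality; apply Z.eq_dec. Defined.

Definition inb (c : cell) (l : list cell) : bool :=
  if in_dec cell_eq_dec c l then true else false.

Lemma inb_In c l : inb c l = true <-> In c l.
Proof. unfold inb. destruct (in_dec cell_eq_dec c l); split; congruence || tauto. Qed.

Fixpoint nodupb (l : list cell) : bool :=
  match l with
  | [] => true
  | c :: l => negb (inb c l) && nodupb l
  end.

Lemma nodupb_NoDup l : nodupb l = true -> NoDup l.
Proof.
  induction l as [| c l IH]; simpl; intros H; constructor.
  - apply andb_true_iff in H as [H _]. rewrite <- inb_In.
    destruct (inb c l); discriminate || tauto.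
  - apply IH. apply andb_true_iff in H. tauto.
Qed.

Definition boxb (u0 u1 v0 v1 : Z) (c : cell) : bool :=
  (u0 <=? fst c + snd c) && (fst c + snd c <=? u1) &&
  (v0 <=? snd c - fst c) && (snd c - fst c <=? v1).

Lemma boxb_box u0 u1 v0 v1 c : boxb u0 u1 v0 v1 c = true <-> box u0 u1 v0 v1 c.
Proof. unfold boxb, box. rewrite !andb_true_iff, !Z.leb_le. tauto. Qed.

(* A finite list of cells containing the box: i = (u - v) / 2, j = (u + v) / 2. *)
Definition box_hull (u0 u1 v0 v1 : Z) : list cell :=
  list_prod (zseq ((u0 - v1) / 2) (Z.to_nat ((u1 - v0) / 2 - (u0 - v1) / 2 + 1)))
            (zseq ((u0 + v0) / 2) (Z.to_nat ((u1 + v1) / 2 - (u0 + v0) / 2 + 1))).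

Lemma box_hull_complete u0 u1 v0 v1 c : box u0 u1 v0 v1 c -> In c (box_hull u0 u1 v0 v1).
Proof.
  destruct c as [i j]. unfold box, box_hull; cbn [fst snd]. intros H.
  apply in_prod_iff. rewrite !in_zseq. Z.div_mod_to_equations. lia.
Qed.

Definition tiles_boxb (u0 u1 v0 v1 : Z) (d : list (nat * Z * Z)) : bool :=
  let cells := concat (map (fun '(k, i, j) => tromino k i j) d) in
  nodupb cells && forallb (boxb u0 u1 v0 v1) cells &&
  forallb (fun c => implb (boxb u0 u1 v0 v1 c) (inb c cells)) (box_hull u0 u1 v0 v1).

Lemma tileable_box_of_tiles_boxb u0 u1 v0 v1 d :
  tiles_boxb u0 u1 v0 v1 d = true -> tileable (box u0 u1 v0 v1).
Proof.
  unfold tiles_boxb. rewrite !andb_true_iff, !forallb_forall.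
  intros [[Hdup Hin] Hcov]. exists (map (fun '(k, i, j) => tromino k i j) d).
  unfold no_defects. split; [| split].
  - intros t Ht. apply in_map_iff in Ht as [[[k i] j] [<- _]]. apply L_tromino_tromino.
  - now apply nodupb_NoDup.
  - intros c. split.
    + intros Hc. rewrite <- boxb_box. auto.
    + intros [Hc _]. specialize (Hcov c (box_hull_complete _ _ _ _ _ Hc)).
      apply boxb_box in Hc. rewrite Hc in Hcov. now apply inb_In.
Qed.

Lemma tileable_aztec_2_2 : tileable (aztec_rect 2 2).
Proof.
  apply (tileable_box_of_tiles_boxb _ _ _ _
    [(0%nat, -2, 2); (1%nat, -1, 1); (2%nat, -1, 3); (3%nat, 0, 2)]).
  now vm_compute.
Qed.

Lemma tileable_aztec_3_3 : tileable (aztec_rect 3 3).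
Proof.
  apply (tileable_box_of_tiles_boxb _ _ _ _
    [(0%nat, -3, 3); (1%nat, -2, 2); (0%nat, -2, 4); (1%nat, -1, 1);
     (2%nat, -1, 5); (3%nat, 0, 2); (2%nat, 0, 4); (3%nat, 1, 3)]).
  now vm_compute.
Qed.

Lemma tileable_row_block_2 : tileable (box 0 4 2 7).
Proof.
  apply (tileable_box_of_tiles_boxb _ _ _ _
    [(0%nat, -3, 3); (3%nat, -2, 1); (2%nat, -2, 4); (2%nat, -1, 3); (2%nat, 0, 2)]).
  now vm_compute.
Qed.

Lemma tileable_row_block_3 : tileable (box 0 6 2 7).
Proof.
  apply (tileable_box_of_tiles_boxb _ _ _ _
    [(0%nat, -3, 3); (3%nat, -2, 1); (0%nat, -2, 4); (3%nat, -1, 2);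
     (2%nat, -1, 5); (2%nat, 0, 4); (2%nat, 1, 3)]).
  now vm_compute.
Qed.

Lemma tileable_col_base_2 : tileable (box 1 6 1 5).
Proof.
  apply (tileable_box_of_tiles_boxb _ _ _ _
    [(1%nat, -2, 3); (3%nat, -1, 1); (3%nat, 0, 2); (2%nat, 0, 4); (3%nat, 1, 3)]).
  now vm_compute.
Qed.

Lemma tileable_col_base_3 : tileable (box 1 6 1 7).
Proof.
  apply (tileable_box_of_tiles_boxb _ _ _ _
    [(1%nat, -3, 4); (1%nat, -2, 3); (3%nat, -1, 1); (2%nat, -1, 5);
     (3%nat, 0, 2); (2%nat, 0, 4); (3%nat, 1, 3)]).
  now vm_compute.
Qed.

Lemma tileable_col_block : tileable (box 1 6 2 7).
Proof.
  apply (tileable_box_of_tiles_boxb _ _ _ _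
    [(1%nat, -3, 4); (1%nat, -2, 3); (1%nat, -1, 2); (2%nat, -1, 5);
     (2%nat, 0, 4); (2%nat, 1, 3)]).
  now vm_compute.
Qed.

Lemma aztec_area_mod3 a b :
  (a * (b + 1) + b * (a + 1)) mod 3
  = (2 * (a mod 3) * (b mod 3) + a mod 3 + b mod 3) mod 3.
Proof.
  rewrite (Z.div_mod a 3) at 1 2 by lia. rewrite (Z.div_mod b 3) at 1 2 by lia.
  set (r := a mod 3). set (s := b mod 3). set (x := a / 3). set (y := b / 3).
  replace ((3 * x + r) * (3 * y + s + 1) + (3 * y + s) * (3 * x + r + 1))
    with (2 * r * s + r + s + (6 * x * y + 2 * x * s + 2 * r * y + x + y) * 3) by ring.
  apply Z.mod_add. lia.
Qed.

Lemma aztec_area_mod3_eq0 a b : (a * (b + 1) + b * (a + 1)) mod 3 = 0 ->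
  (a mod 3 = 2 /\ b mod 3 = 2) \/ (a mod 3 = 0 /\ b mod 3 = 0).
Proof.
  rewrite aztec_area_mod3.
  assert (Ha : a mod 3 = 0 \/ a mod 3 = 1 \/ a mod 3 = 2)
    by (pose proof (Z.mod_pos_bound a 3); lia).
  assert (Hb : b mod 3 = 0 \/ b mod 3 = 1 \/ b mod 3 = 2)
    by (pose proof (Z.mod_pos_bound b 3); lia).
  destruct Ha as [-> | [-> | ->]], Hb as [-> | [-> | ->]]; simpl; intros H;
    discriminate || tauto.
Qed.

Lemma tileable_aztec_of_area a b : 0 < a -> 0 < b ->
  (a * (b + 1) + b * (a + 1)) mod 3 = 0 -> tileable (aztec_rect a b).
Proof.
  intros Ha Hb Harea.
  pose proof (Z.div_mod a 3 ltac:(lia)) as Ea. pose proof (Z.div_mod b 3 ltac:(lia)) as Eb.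
  destruct (aztec_area_mod3_eq0 a b Harea) as [[Ra Rb] | [Ra Rb]].
  - pose proof (tileable_aztec_period 2 ltac:(lia) tileable_aztec_2_2 tileable_row_block_2
      tileable_col_base_2 tileable_col_block (a / 3) (b / 3)) as H.
    replace a with (2 + 3 * (a / 3)) by lia. replace b with (2 + 3 * (b / 3)) by lia.
    apply H; apply Z.div_pos; lia.
  - pose proof (tileable_aztec_period 3 ltac:(lia) tileable_aztec_3_3 tileable_row_block_3
      tileable_col_base_3 tileable_col_block (a / 3 - 1) (b / 3 - 1)) as H.
    replace a with (3 + 3 * (a / 3 - 1)) by lia. replace b with (3 + 3 * (b / 3 - 1)) by lia.
    apply H; lia.
Qed.

Lemma length_concat_trominoes (ts : list (list cell)) :
  (forall t, In t ts -> L_tromino t) -> length (concat ts) = (3 * length ts)%nat.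
Proof.
  induction ts as [| t ts IH]; intros HL; simpl; [reflexivity |].
  rewrite length_app, IH by (intros; apply HL; simpl; auto).
  destruct (HL t (or_introl eq_refl)) as [i [j [-> | [-> | [-> | ->]]]]]; simpl; lia.
Qed.

Lemma tileable_length_mod3 (R : cell -> Prop) (cells : list cell) :
  NoDup cells -> (forall c, In c cells <-> R c) -> tileable R ->
  Z.of_nat (length cells) mod 3 = 0.
Proof.
  intros Hdup Hcells [ts [HL [HN HM]]].
  assert (Hperm : Permutation (concat ts) cells).
  { apply NoDup_Permutation; auto.
    intros c. rewrite HM, Hcells. unfold no_defects. tauto. }
  rewrite <- (Permutation_length Hperm), length_concat_trominoes by exact HL.
  rewrite Nat2Z.inj_mul, Z.mul_comm. apply Z_mod_mult.
Qed.

Lemma NoDup_list_prod {A B} (l : list A) (l' : list B) :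
  NoDup l -> NoDup l' -> NoDup (list_prod l l').
Proof.
  induction 1 as [| x l Hx Hl IH]; intros Hl'; simpl; [constructor |].
  apply NoDup_app.
  - apply Injective_map_NoDup; [intros y z H; now injection H | exact Hl'].
  - now apply IH.
  - intros [p q] Hin Hin2. apply in_map_iff in Hin as [y [Hy _]].
    injection Hy as <- _. apply in_prod_iff in Hin2 as [Hp _]. contradiction.
Qed.

Lemma NoDup_zseq lo n : NoDup (zseq lo n).
Proof. apply Injective_map_NoDup; [intros x y H; lia | apply seq_NoDup]. Qed.

Lemma length_zseq lo n : length (zseq lo n) = n.
Proof. unfold zseq; now rewrite length_map, length_seq. Qed.

(* The cells of AR_{a,b} with u = 2s, v = 2t and those with u = 2s + 1, v = 2t + 1. *)
Definition aztec_cells (a b : Z) : list cell :=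
  map (fun st => (fst st - snd st, fst st + snd st))
    (list_prod (zseq 0 (Z.to_nat b + 1)) (zseq 1 (Z.to_nat a))) ++
  map (fun st => (fst st - snd st, fst st + snd st + 1))
    (list_prod (zseq 0 (Z.to_nat b)) (zseq 0 (Z.to_nat a + 1))).

Lemma NoDup_aztec_cells a b : NoDup (aztec_cells a b).
Proof.
  unfold aztec_cells. apply NoDup_app.
  - apply Injective_map_NoDup; [| apply NoDup_list_prod; apply NoDup_zseq].
    intros [x y] [z w] H; simpl in H. injection H. intros. f_equal; lia.
  - apply Injective_map_NoDup; [| apply NoDup_list_prod; apply NoDup_zseq].
    intros [x y] [z w] H; simpl in H. injection H. intros. f_equal; lia.
  - intros c H1 H2. apply in_map_iff in H1 as [[x y] [<- _]].
    apply in_map_iff in H2 as [[z w] [E _]]. simpl in E. injection E. lia.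
Qed.

Lemma in_aztec_cells a b c : 0 <= a -> 0 <= b -> In c (aztec_cells a b) <-> aztec_rect a b c.
Proof.
  intros Ha Hb. unfold aztec_cells, aztec_rect. rewrite in_app_iff, !in_map_iff.
  destruct c as [i j]; cbn [fst snd]. split.
  - intros [[[x y] [E Hin]] | [[x y] [E Hin]]]; cbn [fst snd] in E; injection E as <- <-;
      apply in_prod_iff in Hin as [H1 H2]; rewrite in_zseq in H1, H2; lia.
  - intros H. destruct (Z.Even_or_Odd (i + j)) as [[s Hs] | [s Hs]].
    + left. exists (s, s - i). cbn [fst snd]. split; [f_equal; lia |].
      apply in_prod_iff. rewrite !in_zseq. lia.
    + right. exists (s, s - i). cbn [fst snd]. split; [f_equal; lia |].
      apply in_prod_iff. rewrite !in_zseq. lia.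
Qed.

Lemma length_aztec_cells a b : 0 <= a -> 0 <= b ->
  Z.of_nat (length (aztec_cells a b)) = a * (b + 1) + b * (a + 1).
Proof.
  intros Ha Hb. unfold aztec_cells.
  rewrite length_app, !length_map, !length_prod, !length_zseq. lia.
Qed.

Theorem theorem1 :
  forall a b : Z, 0 < a -> 0 < b ->
    ((exists ts : list (list cell), cover (aztec_rect a b) no_defects ts) <->
     (a * (b + 1) + b * (a + 1)) mod 3 = 0).
Proof.
  intros a b Ha Hb. split.
  - intros Htile. rewrite <- length_aztec_cells by lia.
    apply (tileable_length_mod3 (aztec_rect a b)); [apply NoDup_aztec_cells | | exact Htile].
    intros c. apply in_aztec_cells; lia.
  - exact (tileable_aztec_of_area a b Ha Hb).
Qed.
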